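(* There is an absolute constant $c>0$ such that the following holds. Let $J\ge 1$ and let $\mathbf{b}=(b_1,\dots,b_J)$ be non-negative integers with $b_1+\cdots+b_J=J$. Then \[ \sum_{\mathbf{d}\in\mathcal{D}(\mathbf{b})} \frac{|\mathscr{L}^*(\mathbf{d})|}{d_1\cdots d_J} \ge c\,\frac{(2\log 2)^J}{\sum_{i=1}^J 2^{b_1+\cdots+b_i-i}}. \]
   Context: $\mathcal{D}(\mathbf{b}) = \prod_{i=1}^J \{2^{i-1},2^{i-1}+1,\dots,2^i-1\}^{b_i}$, i.e. the set of $J$-tuples $\mathbf{d}=(d_1,\dots,d_J)$ of positive integers whose first $b_1$ coordinates lie in $[1,1]$, next $b_2$ coordinates lie in $[2,3]$, ..., last $b_J$ coordinates lie in $[2^{J-1},2^J-1]$. For a tuple $\mathbf{a}=(a_1,\dots,a_r)$, $\mathscr{L}^*(\mathbf{a}) = \{\sum_{i\in I} a_i : I\subset\{1,\dots,r\}\}$ is its set of subset sums, and $|\cdot|$ denotes cardinality. Logarithms are natural. *)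

From Stdlib Require Import Reals.
From mathcomp Require Import all_boot all_order all_algebra.
From mathcomp Require Import Rstruct.
Set Implicit Arguments. Unset Strict Implicit. Unset Printing Implicit Defensive.
Import Order.TTheory GRing.Theory Num.Theory.

(* Partial sum b_1 + ... + b_i (0-indexed b : 'I_J -> nat, i counts terms). *)
Definition psum (J : nat) (b : 'I_J -> nat) (i : nat) : nat :=
  \sum_(j < J | (j < i)%N) b j.

(* d lies in D(b): coordinate k (0-indexed) belongs to block i (0-indexed),
   i.e. psum b i <= k < psum b (i+1), and then 2^i <= d_k <= 2^(i+1) - 1.
   Every element of D(b) has all coordinates < 2^J, so the values of d are
   taken in 'I_(2^J) without loss. *)
Definition inD (J : nat) (b : 'I_J -> nat) (d : {ffun 'I_J -> 'I_(2 ^ J)}) : bool :=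
  [forall i : 'I_J, forall k : 'I_J,
     ((psum b i <= k) && (k < psum b i.+1))%N ==>
     ((2 ^ i <= d k) && (d k < 2 ^ i.+1))%N].

Definition subset_sums (J : nat) (d : 'I_J -> nat) : seq nat :=
  undup [seq (\sum_(i in A) d i)%N | A : {set 'I_J} <- enum {set 'I_J}].

(* Weight d in D(b) by w(d) = 1/(d_1 ... d_J), so the left-hand side is the
   w-weighted number of distinct subset sums.  If N_s subsets of d have sum s,
   then 1 >= 2 N_s / t - N_s^2 / t^2, hence |L*(d)| >= 2^(J+1)/t - E(d)/t^2 where
   E(d) counts pairs of subsets (A, A') with equal sums.  For A <> A', let k be the
   largest element of the symmetric difference of A and A'; once the other
   coordinates are fixed, d_k is determined, so the total weight of the d with
   equal sums over A and A' is at most 2^(1-i) S, where S is the total mass and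
   i is the block of k.  As at most 2^(k+1) sets have largest element k, the
   weighted E is at most 2^J S (1 + 2K), where K = sum_k 2^(k+1-i_k) is at most
   4 sum_i 2^(b_1+...+b_i-i); then t = 1 + 2K gives a weighted count of at
   least 2^J S / (1 + 2K).  Finally every block contributes a factor
   sum_{2^i <= x < 2^(i+1)} 1/x >= log 2 to S. *)

From Stdlib Require Import Reals Lra.
From mathcomp Require Import all_boot all_order all_algebra perm.
From mathcomp Require Import Rstruct ring zify.
Set Implicit Arguments. Unset Strict Implicit. Unset Printing Implicit Defensive.
Import Order.TTheory GRing.Theory Num.Theory.
Local Open Scope ring_scope.

Section LnStep.
Local Open Scope R_scope.

Lemma ln_succ_sub_le (x : R) : 0 < x -> ln (x + 1) - ln x <= / x.
Proof.
move=> x0; have ix0 := Rinv_0_lt_compat x x0.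
have -> : x + 1 = x * (1 + / x) by rewrite Rmult_plus_distr_l Rmult_1_r Rinv_r //; lra.
rewrite ln_mult //; last lra.
have := ln_increasing _ _ (ltac:(lra) : 0 < 1 + / x) (exp_ineq1 _ (Rgt_not_eq _ _ ix0)).
rewrite ln_exp; lra.
Qed.

End LnStep.

Lemma ln2_le_sum_inv (m : nat) : (0 < m)%N -> ln 2 <= \sum_(m <= x < m.*2) (x%:R : R)^-1.
Proof.
move=> m_gt0; have le_mm : (m <= m.*2)%N by rewrite -addnn leq_addr.
have -> : ln 2 = ln (m.*2)%:R - ln m%:R.
  by rewrite -mul2n natrM -RmultE ln_mult ?RplusE ?addrK //; apply/RltP; rewrite ltr0n.
rewrite -(telescope_sumr (fun k => ln k%:R) le_mm).
apply: ler_sum_nat => k /andP [mk _]; apply/RleP; rewrite -natr1.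
by have := @ln_succ_sub_le k%:R; rewrite !RealsE; apply; apply/RltP; rewrite ltr0n (leq_trans m_gt0).
Qed.

Lemma inv2_le_ln2 : 2^-1 <= ln 2 :> R.
Proof. by apply/ltW/RltP; have := ln_lt_2; rewrite !RealsE. Qed.

Lemma size_undup_map_ge (R : realFieldType) (T : finType) (U : eqType) (h : T -> U) (t : R) :
  0 < t ->
  2 * #|T|%:R / t - (\sum_x \sum_y ((h x == h y)%:R : R)) / t ^+ 2
    <= (size (undup (map h (enum T))))%:R.
Proof.
move=> t_gt0; set L := undup _.
have L_uniq : uniq L := undup_uniq _.
have hL x : h x \in L by rewrite mem_undup map_f ?mem_enum.
have sum_hit x (F : U -> R) : \sum_(s <- L) (h x == s)%:R * F s = F (h x).
  rewrite (big_rem (h x)) //= eqxx mul1r big1_seq ?addr0 // => s /andP [_].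
  rewrite mem_rem_uniq // inE eq_sym => /andP [/negbTE -> _].
  by rewrite mul0r.
pose N s := \sum_x ((h x == s)%:R : R).
have sumN : \sum_(s <- L) N s = #|T|%:R.
  rewrite exchange_big /= -sumr_const; apply: eq_bigr => x _.
  by rewrite -[RHS](sum_hit x (fun=> 1)); apply: eq_bigr => s _; rewrite mulr1.
have sumN2 : \sum_(s <- L) N s ^+ 2 = \sum_x \sum_y ((h x == h y)%:R : R).
  transitivity (\sum_(s <- L) \sum_x \sum_y ((h x == s)%:R * (h y == s)%:R : R)).
    by apply: eq_bigr => s _; rewrite expr2 mulr_suml; apply: eq_bigr => x _; rewrite mulr_sumr.
  rewrite exchange_big; apply: eq_bigr => x _; rewrite exchange_big; apply: eq_bigr => y _.
  by rewrite (sum_hit x (fun s => (h y == s)%:R)) eq_sym.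
rewrite -sum1_size natr_sum -sumN -sumN2 mulr_sumr !mulr_suml -sumrB.
apply: ler_sum => s _; rewrite -subr_ge0.
have -> : 1%:R - (2 * N s / t - N s ^+ 2 / t ^+ 2) = (1 - N s / t) ^+ 2.
  by field; rewrite gt_eqF.
exact: sqr_ge0.
Qed.

Section FfunUpdate.
Variables (I T : finType).
Implicit Types (d : {ffun I -> T}) (k : I) (x : T).

Definition fupd d k x : {ffun I -> T} := [ffun j => if j == k then x else d j].

Lemma fupd_eq d k x : fupd d k x k = x.
Proof. by rewrite ffunE eqxx. Qed.

Lemma fupd_neq d k x j : j != k -> fupd d k x j = d j.
Proof. by rewrite ffunE => /negbTE ->. Qed.

Lemma fupd_fupd d k x y : fupd (fupd d k x) k y = fupd d k y.
Proof. by apply/ffunP => j; rewrite !ffunE; case: eqP. Qed.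

Lemma fupd_id d k : fupd d k (d k) = d.
Proof. by apply/ffunP => j; rewrite !ffunE; case: eqP => // ->. Qed.

(* Transposing c and t d in the coordinate k is an involution of the
   d's that exchanges the two constraints. *)
Lemma sum_coord_eq_indep (V : nmodType) (P : {ffun I -> T} -> V) (t : {ffun I -> T} -> T) k c :
  (forall d x, P (fupd d k x) = P d) -> (forall d x, t (fupd d k x) = t d) ->
  \sum_(d : {ffun I -> T} | d k == t d) P d = \sum_(d : {ffun I -> T} | d k == c) P d.
Proof.
move=> P_indep t_indep; pose s d := fupd d k (tperm c (t d) (d k)).
have s_inv : involutive s by move=> d; rewrite /s t_indep fupd_eq fupd_fupd tpermK fupd_id.
rewrite (reindex_inj (inv_inj s_inv)); apply: eq_big => [d|d _]; last by rewrite P_indep.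
by rewrite /s t_indep fupd_eq -[X in _ == X](tpermL c (t d)) (inj_eq perm_inj).
Qed.

Lemma sum_prod_coord_eq (R : comPzSemiRingType) (f : I -> T -> R) k c :
  \sum_(d : {ffun I -> T} | d k == c) \prod_(j | j != k) f j (d j)
    = \prod_(j | j != k) \sum_x f j x.
Proof.
pose g j x := if j == k then (if x == c then 1 else 0) else f j x.
transitivity (\sum_(d : {ffun I -> T}) \prod_j g j (d j)).
  rewrite big_mkcond; apply: eq_bigr => d _; rewrite [RHS](bigD1 k) //= {1}/g eqxx.
  case: eqP => _; rewrite ?mul1r ?mul0r //.
  by apply: eq_bigr => j /negbTE jk; rewrite /g jk.
rewrite -bigA_distr_bigA (bigD1 k) //= {1}/g eqxx -big_mkcond big_pred1_eq mul1r.
by apply: eq_bigr => j /negbTE jk; rewrite /g jk.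
Qed.

End FfunUpdate.

Definition subset_sum (I : finType) (d : I -> nat) (A : {set I}) : nat := (\sum_(i in A) d i)%N.

Definition symdiff (I : finType) (A B : {set I}) : {set I} := [set x | (x \in A) (+) (x \in B)].

Lemma symdiffK (I : finType) (A : {set I}) : involutive (symdiff A).
Proof. by move=> B; apply/setP => x; rewrite !inE addbA addbb. Qed.

Lemma symdiff0 (I : finType) (A : {set I}) : symdiff A set0 = A.
Proof. by apply/setP => x; rewrite !inE addbF. Qed.

Lemma card_set_ord_leq (J : nat) (k : 'I_J) : (#|[set j : 'I_J | (j <= k)%N]| <= k.+1)%N.
Proof.
rewrite cardE -(size_map val) -(size_iota 0 k.+1).
apply: uniq_leq_size; first by rewrite (map_inj_uniq val_inj) enum_uniq.
by move=> i /mapP [j]; rewrite mem_enum inE => jk ->; rewrite mem_iota.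
Qed.

Lemma card_set_ord (J : nat) : #|{set 'I_J}| = (2 ^ J)%N.
Proof. by rewrite -cardsT -powersetT card_powerset cardsT card_ord. Qed.

Section CoincidenceMass.
Variables (R : realFieldType) (J n : nat) (f : 'I_J -> 'I_n -> R) (M : 'I_J -> R).
Hypotheses (n_gt0 : (0 < n)%N) (f_ge0 : forall j x, 0 <= f j x)
  (f_le : forall j x, f j x <= M j) (half_le_mass : forall j, 2^-1 <= \sum_x f j x).

Local Notation dT := {ffun 'I_J -> 'I_n}.
Local Notation sum_on d A := (subset_sum (fun k => nat_of_ord (d k)) A).
Local Notation mass j := (\sum_x f j x).
Local Notation total_mass := (\prod_j \sum_x f j x).
Local Notation K := (\sum_k M k * (2 ^ k.+1)%:R).

Definition weight (d : dT) : R := \prod_j f j (d j).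

Definition coincidence (A A' : {set 'I_J}) : R :=
  \sum_(d : dT | sum_on d A == sum_on d A') weight d.

Lemma M_ge0 (k : 'I_J) : 0 <= M k.
Proof. exact: le_trans (f_ge0 k (Ordinal n_gt0)) (f_le k _). Qed.

Lemma subset_sum_fupd (d : dT) k x (B : {set 'I_J}) :
  k \notin B -> sum_on (fupd d k x) B = sum_on d B.
Proof.
move=> kB; apply: eq_bigr => i iB; rewrite fupd_neq //.
by apply: contraNneq kB => <-.
Qed.

(* Once the other coordinates are fixed, equal sums over A and A' determine
   the coordinate k. *)
Lemma coincidence_le_notin (A A' : {set 'I_J}) (k : 'I_J) : k \in A -> k \notin A' ->
  coincidence A A' <= M k * \prod_(j | j != k) mass j.
Proof.
move=> kA kA'; pose c := Ordinal n_gt0.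
pose t (d : dT) : 'I_n := insubd c (sum_on d A' - sum_on d (A :\ k))%N.
pose P (d : dT) := \prod_(j | j != k) f j (d j).
have P_indep d x : P (fupd d k x) = P d by apply: eq_bigr => j jk; rewrite fupd_neq.
have t_indep d x : t (fupd d k x) = t d by rewrite /t !subset_sum_fupd ?setD11.
apply: (@le_trans _ _ (\sum_(d : dT | d k == t d) M k * P d)); last first.
  by rewrite -mulr_sumr (sum_coord_eq_indep c P_indep t_indep) sum_prod_coord_eq.
rewrite [X in X <= _]big_mkcond [X in _ <= X]big_mkcond /=; apply: ler_sum => d _.
case: eqP => [eq_sums|_]; last by case: ifP; rewrite ?mulr_ge0 ?M_ge0 ?prodr_ge0.
have -> : d k == t d.
  apply/eqP/val_inj; rewrite /t val_insubd -eq_sums /subset_sum (big_setD1 k kA) /=.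
  by rewrite addnK ltn_ord.
by rewrite /weight (bigD1 k) //= ler_wpM2r ?prodr_ge0.
Qed.

Lemma prod_mass_neq_le (k : 'I_J) : \prod_(j | j != k) mass j <= 2 * total_mass.
Proof.
rewrite [X in _ <= _ * X](bigD1 k) //= mulrA ler_peMl //.
  by apply: prodr_ge0 => j _; apply: sumr_ge0.
by rewrite -ler_pdivrMl ?ltr0n // mulr1.
Qed.

Lemma coincidence_le (A A' : {set 'I_J}) (k : 'I_J) :
  k \in symdiff A A' -> coincidence A A' <= 2 * M k * total_mass.
Proof.
have bound (B B' : {set 'I_J}) :
    k \in B -> k \notin B' -> coincidence B B' <= 2 * M k * total_mass.
  move=> kB kB'; apply: le_trans (coincidence_le_notin kB kB') _.
  by rewrite -mulrA mulrCA ler_wpM2l ?M_ge0 ?prod_mass_neq_le.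
rewrite inE; case kA: (k \in A); case kA': (k \in A') => //= _.
  by apply: bound; rewrite ?kA'.
rewrite /coincidence (eq_bigl (fun d : dT => sum_on d A' == sum_on d A)) => [|d]; last exact: eq_sym.
by apply: bound; rewrite ?kA.
Qed.

Lemma coincidence_diag (A : {set 'I_J}) : coincidence A A = total_mass.
Proof. by rewrite /coincidence bigA_distr_bigA; apply: eq_bigl => d; rewrite eqxx. Qed.

Lemma coincidence_symdiff_le (A C : {set 'I_J}) : C != set0 ->
  coincidence A (symdiff A C)
    <= \sum_(k : 'I_J | C \subset [set j : 'I_J | (j <= k)%N]) 2 * M k * total_mass.
Proof.
move=> /set0Pn [i0 i0C].
have [k kC k_max] := @arg_maxnP _ i0 (mem C) (fun i : 'I_J => nat_of_ord i) i0C.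
apply: le_trans (coincidence_le (k := k) _) _; first by rewrite symdiffK.
rewrite [X in _ <= X](bigD1 k) /=; last by apply/subsetP => j jC; rewrite inE; exact: k_max.
rewrite lerDl sumr_ge0 // => j _.
by rewrite !mulr_ge0 ?M_ge0 // prodr_ge0 // => i _; apply: sumr_ge0.
Qed.

Lemma total_mass_ge0 : 0 <= total_mass.
Proof. by apply: prodr_ge0 => j _; apply: sumr_ge0. Qed.

Lemma coincidence_row_le (A : {set 'I_J}) :
  \sum_(A' : {set 'I_J}) coincidence A A' <= total_mass * (1 + 2 * K).
Proof.
rewrite (reindex_inj (inv_inj (symdiffK A))) /= (bigD1 set0) //= symdiff0.
rewrite coincidence_diag mulrDr mulr1 lerD2l.
apply: (@le_trans _ _ (\sum_(C : {set 'I_J}) \sum_(k : 'I_J | C \subset [set j : 'I_J | (j <= k)%N])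
                         2 * M k * total_mass)).
  rewrite [X in _ <= X](bigD1 set0) //=; apply: ler_wpDl.
    by apply: sumr_ge0 => k _; rewrite !mulr_ge0 ?M_ge0 ?total_mass_ge0.
  by apply: ler_sum => C; apply: coincidence_symdiff_le.
rewrite (exchange_big_dep xpredT) //= mulr_sumr mulr_sumr; apply: ler_sum => k _.
rewrite (eq_bigl (mem (powerset [set j : 'I_J | (j <= k)%N]))) => [|C]; last by rewrite -powersetE.
rewrite sumr_const card_powerset -[X in X <= _]mulr_natr.
have -> : total_mass * (2 * (M k * (2 ^ k.+1)%:R)) = 2 * M k * total_mass * (2 ^ k.+1)%:R by ring.
by rewrite ler_wpM2l ?mulr_ge0 ?M_ge0 ?total_mass_ge0 // ler_nat leq_pexp2l // card_set_ord_leq.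
Qed.

Lemma coincidence_total_le :
  \sum_(A : {set 'I_J}) \sum_(A' : {set 'I_J}) coincidence A A'
    <= (2 ^ J)%:R * (total_mass * (1 + 2 * K)).
Proof.
apply: (@le_trans _ _ (\sum_(A : {set 'I_J}) total_mass * (1 + 2 * K))).
  by apply: ler_sum => A _; apply: coincidence_row_le.
by rewrite sumr_const card_set_ord -[X in X <= _]mulr_natl.
Qed.

(* [t = 1 + 2 K] maximises [2 / t - (1 + 2 K) / t ^ 2], which is what
   [size_undup_map_ge] yields after weighting. *)
Theorem weighted_size_subset_sums_ge :
  (2 ^ J)%:R * total_mass / (1 + 2 * K)
    <= \sum_(d : dT) weight d * (size (subset_sums (fun k => nat_of_ord (d k))))%:R.
Proof.
set S := total_mass; set t := 1 + 2 * K.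
have t_gt0 : 0 < t.
  by rewrite ltr_wpDr ?ltr01 // mulr_ge0 // sumr_ge0 // => k _; rewrite mulr_ge0 ?M_ge0.
pose E (d : dT) := \sum_(A : {set 'I_J}) \sum_(A' : {set 'I_J}) ((sum_on d A == sum_on d A')%:R : R).
have size_ge (d : dT) :
    2 * (2 ^ J)%:R / t - E d / t ^+ 2 <= (size (subset_sums (fun k => nat_of_ord (d k))))%:R.
  have := size_undup_map_ge (fun A : {set 'I_J} => sum_on d A) t_gt0.
  by rewrite card_set_ord.
have weighted_E : \sum_d weight d * E d = \sum_A \sum_A' coincidence A A'.
  under eq_bigr do rewrite mulr_sumr; rewrite exchange_big; apply: eq_bigr => A _.
  under eq_bigr do rewrite mulr_sumr; rewrite exchange_big; apply: eq_bigr => A' _.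
  by rewrite /coincidence [RHS]big_mkcond; apply: eq_bigr => d _; rewrite mulr_natr mulrb.
have weight_ge0 d : 0 <= weight d by apply: prodr_ge0.
apply: le_trans (ler_sum _ (fun d _ => ler_wpM2l (weight_ge0 d) (size_ge d))).
have -> : \sum_d weight d * (2 * (2 ^ J)%:R / t - E d / t ^+ 2)
    = 2 * (2 ^ J)%:R / t * S - (\sum_d weight d * E d) / t ^+ 2.
  rewrite /S bigA_distr_bigA mulr_sumr mulr_suml -sumrB.
  by apply: eq_bigr => d _; rewrite /weight; ring.
rewrite weighted_E.
have t2_ge0 : 0 <= (t ^+ 2)^-1 by rewrite invr_ge0 exprn_ge0 // ltW.
apply: le_trans (lerB (lexx _) (ler_wpM2r t2_ge0 coincidence_total_le)).
by rewrite -/S -/t le_eqVlt; apply/orP; left; apply/eqP; field; rewrite gt_eqF.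
Qed.

End CoincidenceMass.

Lemma exists_step_index (p : nat -> nat) (k m : nat) :
  (p 0 <= k)%N -> (k < p m)%N -> exists2 i, (i < m)%N & (p i <= k < p i.+1)%N.
Proof.
move=> p0k; elim: m => [|m IHm] k_lt; first by have := leq_ltn_trans p0k k_lt; rewrite ltnn.
have [k_lt_m|p_le_k] := ltnP k (p m); last by exists m; rewrite ?p_le_k.
by have [i i_lt_m ik] := IHm k_lt_m; exists i; rewrite // ltnW.
Qed.

Lemma sum_pow2_cond (n p : nat) :
  (\sum_(k < n | (k < p)%N) 2 ^ k = 2 ^ minn n p - 1)%N.
Proof.
elim: n => [|n IHn]; first by rewrite big_ord0 min0n.
rewrite big_mkcond big_ord_recr /= -big_mkcond IHn.
have [n_lt_p|p_le_n] := ltnP n p; last by rewrite (minn_idPr (leqW p_le_n)) addn0.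
rewrite (minn_idPl n_lt_p) expnS; have := expn_gt0 2 n; lia.
Qed.

Lemma pow2_subz (p q : nat) : (2 : R) ^ (p%:Z - q%:Z) = (2 ^ p)%:R / (2 ^ q)%:R.
Proof. by rewrite !RealsE /= expfzDr ?pnatr_eq0 // -exprnP -exprnN !natrX. Qed.

Definition dyadic (i x : nat) : bool := (2 ^ i <= x < 2 ^ i.+1)%N.

Section Blocks.
Variables (J : nat) (b : 'I_J -> nat).

Lemma leq_psum i j : (i <= j)%N -> (psum b i <= psum b j)%N.
Proof.
move=> le_ij; rewrite /psum !(big_mkcond (fun k : 'I_J => (k < _)%N)) /=.
by apply: leq_sum => k _; case: ifP => // k_lt_i; rewrite (leq_trans k_lt_i le_ij).
Qed.

Lemma psum0 : psum b 0 = 0%N.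
Proof. by rewrite /psum big_pred0. Qed.

Hypothesis sum_b : (\sum_(j < J) b j)%N = J.

Lemma psumJ : psum b J = J.
Proof. by rewrite /psum -[RHS]sum_b; apply: eq_bigl => j; rewrite ltn_ord. Qed.

(* The index of the block of coordinates containing k; the default [k] is
   never used since the blocks cover [0, J). *)
Definition block (k : 'I_J) : 'I_J :=
  odflt k [pick i : 'I_J | (psum b i <= k < psum b i.+1)%N].

Lemma blockP (k : 'I_J) : (psum b (block k) <= k < psum b (block k).+1)%N.
Proof.
rewrite /block; case: pickP => [i //|no_block].
have [i i_lt_J ik] : exists2 i, (i < J)%N & (psum b i <= k < psum b i.+1)%N.
  by apply: exists_step_index; rewrite ?psum0 ?psumJ.
by have := no_block (Ordinal i_lt_J); rewrite ik.
Qed.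

Lemma block_eq (k : 'I_J) (i : nat) : (psum b i <= k < psum b i.+1)%N -> block k = i :> nat.
Proof.
move=> /andP [ik ki]; have /andP [bk kb] := blockP k.
have [lt_bi|lt_ib|//] := ltngtP (block k) i.
  by have := leq_psum lt_bi; lia.
by have := leq_psum lt_ib; lia.
Qed.

Lemma inD_block (d : {ffun 'I_J -> 'I_(2 ^ J)}) :
  inD b d = [forall k, dyadic (block k) (d k)].
Proof.
apply/forallP/forallP => [inDd k|dyad i].
  by have /forallP/(_ k)/implyP := inDd (block k); apply; apply: blockP.
apply/forallP => k; apply/implyP => ik.
by have := dyad k; rewrite (_ : block k = i) //; apply: val_inj; apply: block_eq.
Qed.

Definition block_weight (k : 'I_J) (x : 'I_(2 ^ J)) : R :=
  if dyadic (block k) x then x%:R^-1 else 0.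

Definition block_bound (k : 'I_J) : R := (2 ^ block k)%:R^-1.

Lemma block_weight_ge0 (k : 'I_J) (x : 'I_(2 ^ J)) : 0 <= block_weight k x.
Proof. by rewrite /block_weight; case: ifP; rewrite ?invr_ge0. Qed.

Lemma block_weight_le (k : 'I_J) (x : 'I_(2 ^ J)) : block_weight k x <= block_bound k.
Proof.
rewrite /block_weight /block_bound; case: ifP => [/andP [x_ge _]|_]; last by rewrite invr_ge0.
by rewrite lef_pV2 ?posrE ?ltr0n ?ler_nat ?expn_gt0 // (leq_trans _ x_ge) ?expn_gt0.
Qed.

Lemma block_mass (k : 'I_J) :
  \sum_x block_weight k x = \sum_(2 ^ block k <= x < (2 ^ block k).*2) (x%:R : R)^-1.
Proof.
set m := (2 ^ block k)%N.
have m_le : (m.*2 <= 2 ^ J)%N by rewrite -mul2n -expnS leq_pexp2l.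
have le_mm : (m <= m.*2)%N by rewrite -addnn leq_addr.
rewrite /block_weight -(big_mkord xpredT (fun x => if dyadic (block k) x then (x%:R : R)^-1 else 0)).
rewrite (big_cat_nat _ (n := m)) ?(leq_trans le_mm) //= (big_cat_nat _ (n := m.*2) (m := m)) //=.
rewrite big1_seq ?add0r => [|x /andP [_]]; last first.
  by rewrite mem_index_iota /dyadic -/m => /andP [_ x_lt]; rewrite leqNgt x_lt.
rewrite [X in _ + X]big1_seq ?addr0 => [|x /andP [_]]; last first.
  by rewrite mem_index_iota /dyadic -/m expnS mul2n => /andP [x_ge _]; rewrite ltnNge x_ge andbF.
by apply: eq_big_nat => x; rewrite /dyadic -/m expnS mul2n => ->.
Qed.

Lemma ln2_le_block_mass (k : 'I_J) : ln 2 <= \sum_x block_weight k x.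
Proof. by rewrite block_mass ln2_le_sum_inv ?expn_gt0. Qed.

Lemma ln2_pow_le_total_mass : ln 2 ^+ J <= \prod_k \sum_x block_weight k x.
Proof.
rewrite -[X in _ ^+ X]card_ord -prodr_const; apply: ler_prod => k _.
by rewrite ln2_le_block_mass (le_trans _ inv2_le_ln2) ?invr_ge0.
Qed.

Lemma sum_inD_eq :
  \sum_(d : {ffun 'I_J -> 'I_(2 ^ J)} | inD b d)
      (size (subset_sums (fun k => nat_of_ord (d k))))%:R / (\prod_(k < J) (nat_of_ord (d k))%:R)
    = \sum_d weight block_weight d * (size (subset_sums (fun k => nat_of_ord (d k))))%:R.
Proof.
rewrite big_mkcond; apply: eq_bigr => d _; rewrite inD_block.
case: forallP => [dyad|/forallP]; last first.
  by rewrite negb_forall => /existsP [k /negbTE k_out]; rewrite /weight (bigD1 k) //= /block_weight k_out !mul0r.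
rewrite mulrC /weight -prodfV; congr (_ * _); apply: eq_bigr => k _.
by rewrite /block_weight dyad.
Qed.

Local Notation dyadic_sum := (\sum_(i < J) (2 : R) ^ ((psum b i.+1)%:Z - (i.+1)%:Z)).

Lemma one_le_dyadic_sum : (1 <= J)%N -> 1 <= dyadic_sum.
Proof.
move=> J_gt0; have J1_lt : (J.-1 < J)%N by rewrite prednK.
rewrite (bigD1 (Ordinal J1_lt)) //= prednK // psumJ subrr expr0z lerDl.
by apply: sumr_ge0 => i _; rewrite pow2_subz divr_ge0 ?ler0n.
Qed.

Lemma block_bound_sum_le : \sum_k block_bound k * (2 ^ k.+1)%:R <= 4 * dyadic_sum.
Proof.
rewrite (partition_big block xpredT) //= mulr_sumr; apply: ler_sum => i _.
rewrite (eq_bigr (fun k : 'I_J => ((2 ^ i)%:R)^-1 * (2 ^ k.+1)%:R)) => [|k /eqP <- //].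
rewrite -mulr_sumr -natr_sum pow2_subz.
set p := psum b i.+1.
have block_sum_le : (\sum_(k < J | block k == i) 2 ^ k.+1 <= 2 ^ p.+1)%N.
  apply: (@leq_trans (\sum_(k < J | (k < p)%N) 2 ^ k.+1)).
    rewrite [X in (_ <= X)%N]big_mkcond [X in (X <= _)%N]big_mkcond /=; apply: leq_sum => k _.
    by case: eqP => // bk; have := blockP k; rewrite bk => /andP [_ ->].
  rewrite (eq_bigr (fun k : 'I_J => 2 * 2 ^ k)%N) => [|k _]; last by rewrite expnS.
  rewrite -big_distrr /= sum_pow2_cond expnS leq_mul2l /=.
  by rewrite (leq_trans (leq_subr _ _)) // leq_pexp2l // geq_minr.
apply: (@le_trans _ _ (((2 ^ i)%:R)^-1 * (2 ^ p.+1)%:R)).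
  by rewrite ler_wpM2l ?invr_ge0 ?ler_nat.
rewrite !expnS !natrM invfM le_eqVlt; apply/orP; left; apply/eqP.
by field; rewrite ?pnatr_eq0 ?expn_eq0.
Qed.

Lemma block_denominator_le : (1 <= J)%N ->
  1 + 2 * \sum_k block_bound k * (2 ^ k.+1)%:R <= 9 * dyadic_sum.
Proof.
move=> J_gt0; have -> : 9 * dyadic_sum = dyadic_sum + 2 * (4 * dyadic_sum) by ring.
by rewrite lerD ?one_le_dyadic_sum // ler_wpM2l ?ler0n ?block_bound_sum_le.
Qed.

End Blocks.

Theorem lemma4p1 :
  exists c : R, 0 < c /\
  forall (J : nat) (b : 'I_J -> nat),
    (1 <= J)%N -> (\sum_(j < J) b j)%N = J ->
    c * (2 * ln 2) ^+ J
      / (\sum_(i < J) (2 : R) ^ ((psum b i.+1)%:Z - (i.+1)%:Z))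
    <= \sum_(d : {ffun 'I_J -> 'I_(2 ^ J)} | inD b d)
         (size (subset_sums (fun k => nat_of_ord (d k))))%:R
           / (\prod_(k < J) (nat_of_ord (d k))%:R).
Proof.
exists 9^-1; split; first by rewrite invr_gt0 ltr0n.
move=> J b J_gt0 sum_b; rewrite (sum_inD_eq sum_b).
have half_le_mass k : 2^-1 <= \sum_x block_weight b k x.
  exact: le_trans inv2_le_ln2 (ln2_le_block_mass b k).
apply: le_trans _ (weighted_size_subset_sums_ge (expn_gt0 2 J) (block_weight_ge0 b)
                   (block_weight_le b) half_le_mass).
have D_gt0 := lt_le_trans ltr01 (one_le_dyadic_sum sum_b J_gt0).
have K_le := block_denominator_le sum_b J_gt0; have S_ge := ln2_pow_le_total_mass b.
set D := \sum_(i < J) _ in D_gt0 K_le *; set K := \sum_k _ in K_le *.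
set S := \prod_k _ in S_ge *.
have -> : 9^-1 * (2 * ln 2) ^+ J / D = (2 ^ J)%:R * ln 2 ^+ J / (9 * D).
  by rewrite exprMn natrX; field; rewrite gt_eqF.
rewrite -!mulrA ler_wpM2l // ler_pM ?exprn_ge0 ?invr_ge0 ?mulr_ge0 ?ler0n ?(ltW D_gt0) //.
  by rewrite (le_trans _ inv2_le_ln2) // invr_ge0 ler0n.
have K_ge0 : 0 <= K by apply: sumr_ge0 => k _; rewrite mulr_ge0 ?invr_ge0 ?ler0n.
by rewrite lef_pV2 ?posrE ?mulr_gt0 ?ltr0n ?ltr_wpDr ?mulr_ge0 ?ler0n.
Qed.
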